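(* Let $T\in\mathcal{KC}(V)$ be such that $T$ and $\overline{T}$ are of type $\omega\in(0,\pi)$. Then for every $\theta\in(\omega,\pi)$ there exists $C_\theta\geq0$ such that $\|Q_{c,s}^{-1}(T)\|\leq C_\theta/|s|^2$ for every $s\in S_\theta^c\setminus\{0\}$.
   Context: $\mathbb{H}$ denotes the quaternions $s=s_0+s_1e_1+s_2e_2+s_3e_3$ with $e_1^2=e_2^2=e_3^2=-1$, $e_1e_2=-e_2e_1=e_3$, $e_2e_3=-e_3e_2=e_1$, $e_3e_1=-e_1e_3=e_2$; $|s|$ is the Euclidean norm, $\overline{e_i}=-e_i$ for $i=1,2,3$, $\mathbb{S}=\{s:s_0=0,|s|=1\}$. For $\omega\in(0,\pi)$, $S_\omega=\{re^{J\phi}: r>0, J\in\mathbb{S}, |\phi|<\omega\}$, $\overline{S_\omega}$ its closure, $S_\omega^c=\mathbb{H}\setminus S_\omega$. $V$ is a two-sided Banach space over $\mathbb{H}$, $\mathcal{I}$ the identity. $\mathcal{KC}(V)$ is the class of closed right-linear operators $T$ with two-sided linear domain such that $T=T_0+e_1T_1+e_2T_2+e_3T_3$ with two-sided linear $T_i$, $\operatorname{dom}(T_i)=\operatorname{dom}(T)$, $\operatorname{dom}(T^2)\subseteq\operatorname{dom}(T_iT_j)$ and $T_iT_j=T_jT_i$ on $\operatorname{dom}(T^2)$. $\overline{T}:=T_0-e_1T_1-e_2T_2-e_3T_3$, $|T|^2:=T_0^2+T_1^2+T_2^2+T_3^2$, $Q_{c,s}(T):=s^2\mathcal{I}-2sT_0+|T|^2$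 with domain $\operatorname{dom}(T^2)$. $\rho_S(T)$ is the set of $s\in\mathbb{H}$ for which $Q_{c,s}(T):\operatorname{dom}(T^2)\to V$ is bijective, $Q_{c,s}^{-1}(T)$ the inverse, $\sigma_S(T)=\mathbb{H}\setminus\rho_S(T)$. $S_L^{-1}(s,T):=(s\mathcal{I}-\overline{T})Q_{c,s}^{-1}(T)$ and $S_R^{-1}(s,T):=sQ_{c,s}^{-1}(T)-\sum_{i=0}^3T_iQ_{c,s}^{-1}(T)\overline{e_i}$ ($e_0=1$). $T\in\mathcal{KC}(V)$ is of type $\omega$ if $\sigma_S(T)\subseteq\overline{S_\omega}$ and for every $\theta\in(\omega,\pi)$ there is $C_\theta\geq0$ with $\|S_L^{-1}(s,T)\|\leq C_\theta/|s|$ and $\|S_R^{-1}(s,T)\|\leq C_\theta/|s|$ for all $s\in S_\theta^c\setminus\{0\}$. *)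

From HB Require Import structures.
From mathcomp Require Import all_boot all_order all_algebra.
From mathcomp Require Import all_classical all_reals all_analysis.
Set Implicit Arguments. Unset Strict Implicit. Unset Printing Implicit Defensive.
Import Order.TTheory GRing.Theory Num.Theory.
Import numFieldNormedType.Exports.
Local Open Scope classical_set_scope.
Local Open Scope ring_scope.

Record quat (R : Type) := Quat { q0 : R; q1 : R; q2 : R; q3 : R }.

Section Quat.
Variable R : realType.
Definition qreal (r : R) : quat R := Quat r 0 0 0.
Definition qe1 : quat R := Quat 0 1 0 0.
Definition qe2 : quat R := Quat 0 0 1 0.
Definition qe3 : quat R := Quat 0 0 0 1.
Definition qadd (a b : quat R) : quat R :=
  Quat (q0 a + q0 b) (q1 a + q1 b) (q2 a + q2 b) (q3 a + q3 b).
Definition qopp (a : quat R) : quat R := Quat (- q0 a) (- q1 a) (- q2 a) (- q3 a).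
Definition qsub (a b : quat R) : quat R := qadd a (qopp b).
Definition qscale (r : R) (a : quat R) : quat R :=
  Quat (r * q0 a) (r * q1 a) (r * q2 a) (r * q3 a).
(* Hamilton product: e1 e2 = e3, e2 e3 = e1, e3 e1 = e2, ei^2 = -1 *)
Definition qmul (a b : quat R) : quat R :=
  Quat (q0 a * q0 b - q1 a * q1 b - q2 a * q2 b - q3 a * q3 b)
       (q0 a * q1 b + q1 a * q0 b + q2 a * q3 b - q3 a * q2 b)
       (q0 a * q2 b - q1 a * q3 b + q2 a * q0 b + q3 a * q1 b)
       (q0 a * q3 b + q1 a * q2 b - q2 a * q1 b + q3 a * q0 b).
Definition qconj (a : quat R) : quat R := Quat (q0 a) (- q1 a) (- q2 a) (- q3 a).
Definition qnorm (a : quat R) : R :=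
  Num.sqrt (q0 a ^+ 2 + q1 a ^+ 2 + q2 a ^+ 2 + q3 a ^+ 2).
Definition unit_imag (J : quat R) : Prop := q0 J = 0 /\ qnorm J = 1.
Definition sector (w : R) : set (quat R) :=
  [set s | exists r J phi, 0 < r /\ unit_imag J /\ `|phi| < w /\
     s = qscale r (qadd (qreal (cos phi)) (qscale (sin phi) J))].
Definition qclosure (A : set (quat R)) : set (quat R) :=
  [set s | forall e : R, 0 < e -> exists t, A t /\ qnorm (qsub s t) < e].
End Quat.
Arguments qe1 {R}.
Arguments qe2 {R}.
Arguments qe3 {R}.

Section TwoSided.
Variables (R : realType) (V : completeNormedModType R).
Variables (lm : quat R -> V -> V) (rm : V -> quat R -> V).

Record two_sided_banach : Prop := {
  tsb_ladd : forall a b v, lm (qadd a b) v = lm a v + lm b v;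
  tsb_laddv : forall a u v, lm a (u + v) = lm a u + lm a v;
  tsb_lmul : forall a b v, lm (qmul a b) v = lm a (lm b v);
  tsb_radd : forall a b v, rm v (qadd a b) = rm v a + rm v b;
  tsb_raddv : forall a u v, rm (u + v) a = rm u a + rm v a;
  tsb_rmul : forall a b v, rm v (qmul a b) = rm (rm v a) b;
  tsb_lr : forall a b v, rm (lm a v) b = lm a (rm v b);
  tsb_lreal : forall (r : R) v, lm (qreal r) v = r *: v;
  tsb_rreal : forall (r : R) v, rm v (qreal r) = r *: v;
  tsb_lnorm : forall a v, `|lm a v| = qnorm a * `|v|;
  tsb_rnorm : forall a v, `|rm v a| = qnorm a * `|v| }.

(* ---------- Operators in KC(V) ----------
   An operator T = T0 + e1 T1 + e2 T2 + e3 T3 is given by its common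
   domain D and the components T0..T3 (values outside D are irrelevant). *)
Variables (D : set V) (T0 T1 T2 T3 : V -> V).

Definition opT (v : V) : V := T0 v + lm qe1 (T1 v) + lm qe2 (T2 v) + lm qe3 (T3 v).
Definition opTbar (v : V) : V :=
  T0 v - lm qe1 (T1 v) - lm qe2 (T2 v) - lm qe3 (T3 v).
Definition dom2 : set V := [set v | D v /\ D (opT v)].

Definition two_sided_subspace (A : set V) : Prop :=
  [/\ A 0, (forall u v, A u -> A v -> A (u + v)),
      (forall a v, A v -> A (lm a v)) & (forall a v, A v -> A (rm v a))].

Definition two_sided_linear_on (A : set V) (S : V -> V) : Prop :=
  [/\ (forall u v, A u -> A v -> S (u + v) = S u + S v),
      (forall a v, A v -> S (lm a v) = lm a (S v)) &
      (forall a v, A v -> S (rm v a) = rm (S v) a)].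

Definition comp (i : nat) : V -> V :=
  match i with 0 => T0 | 1 => T1 | 2 => T2 | _ => T3 end.

Definition KC : Prop :=
  [/\ two_sided_subspace D,
      (forall i, (i < 4)%N -> two_sided_linear_on D (comp i)),
      closed [set p : V * V | D p.1 /\ p.2 = opT p.1],
      (forall j v, (j < 4)%N -> dom2 v -> D (comp j v)) &
      (forall i j v, (i < 4)%N -> (j < 4)%N -> dom2 v ->
         comp i (comp j v) = comp j (comp i v))].

Definition Qcs (s : quat R) (v : V) : V :=
  lm (qmul s s) v - lm (qscale 2 s) (T0 v)
  + (T0 (T0 v) + T1 (T1 v) + T2 (T2 v) + T3 (T3 v)).

Definition rhoS : set (quat R) :=
  [set s | (forall w1 w2, dom2 w1 -> dom2 w2 -> Qcs s w1 = Qcs s w2 -> w1 = w2)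
        /\ (forall v, exists w, dom2 w /\ Qcs s w = v)].
Definition sigmaS : set (quat R) := ~` rhoS.

(* Q_{c,s}(T)^{-1} (the genuine inverse when s is in rhoS) *)
Definition Qinv (s : quat R) (v : V) : V :=
  xget 0 [set w | dom2 w /\ Qcs s w = v].

Definition SLinv (s : quat R) (v : V) : V := lm s (Qinv s v) - opTbar (Qinv s v).
(* S_R^{-1}(s,T) = s Q^{-1} - sum_i T_i Q^{-1} conj(e_i)
   (an operator times a scalar a on the right is  v |-> A (a v)) *)
Definition SRinv (s : quat R) (v : V) : V :=
  lm s (Qinv s v) -
  (T0 (Qinv s v) + T1 (Qinv s (lm (qconj qe1) v))
   + T2 (Qinv s (lm (qconj qe2) v)) + T3 (Qinv s (lm (qconj qe3) v))).

Definition type_omega (w : R) : Prop :=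
  [/\ KC,
      sigmaS `<=` qclosure (sector w) &
      forall th : R, w < th < pi -> exists C : R, 0 <= C /\
        forall s, ~ sector th s -> s <> qreal 0 -> forall v,
          `|SLinv s v| <= C / qnorm s * `|v| /\
          `|SRinv s v| <= C / qnorm s * `|v|].
End TwoSided.

(* Conjugation by the units e_k (k = 0..3) intertwines Q_s(T) with Q_{e_k s conj(e_k)}(T),
   and the four points e_k s conj(e_k) lie outside the sector and have the same norm as s,
   so the type-omega estimate ||S_L^{-1}(t,T)|| <= C/|t| applies at each of them.  Averaging
   conj(e_k) c S_L^{-1}(e_k s conj(e_k)) e_k over k, with sum_k conj(e_k) q e_k = 4 Re q,
   isolates each of P_0 = (T_0 - s) Q_s^{-1} and P_j = T_j Q_s^{-1}, which are therefore
   bounded by C/|s| (and map dom(T) into dom(T^2), because S_L^{-1} does, as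
   T conj(T) = |T|^2).  Finally Q_s(T) = (T_0 - s)^2 + T_1^2 + T_2^2 + T_3^2 with commuting
   factors, so Q_s^{-1} = sum_m P_m P_m and ||Q_s^{-1}|| <= 4 C^2 / |s|^2.  Only the
   estimate for S_L^{-1}(s,T) is used, not the hypothesis on conj(T). *)

From Pilot Require Import Defs.
From mathcomp Require Import all_boot all_order all_algebra.
From mathcomp Require Import all_classical all_reals all_analysis.
From mathcomp Require Import ring lra.
Import Order.TTheory GRing.Theory Num.Theory.
Import numFieldNormedType.Exports.
Local Open Scope classical_set_scope.
Local Open Scope ring_scope.
Set Implicit Arguments. Unset Strict Implicit.

Lemma quatP (R : Type) (a b : quat R) :
  q0 a = q0 b -> q1 a = q1 b -> q2 a = q2 b -> q3 a = q3 b -> a = b.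
Proof. by case: a b => ? ? ? ? [? ? ? ?] /= -> -> -> ->. Qed.

Ltac quat_ring := apply: quatP; rewrite /=; ring.

Section Quaternions.
Variable R : realType.
Implicit Types (a b q s : quat R) (r : R).

Lemma qmulA a b q : qmul a (qmul b q) = qmul (qmul a b) q.
Proof. by case: a b q => ? ? ? ? [? ? ? ?] [? ? ? ?]; quat_ring. Qed.

Lemma qmul1q a : qmul (qreal 1) a = a.
Proof. by case: a => ? ? ? ?; quat_ring. Qed.

Lemma qmulq1 a : qmul a (qreal 1) = a.
Proof. by case: a => ? ? ? ?; quat_ring. Qed.

Lemma qconj_mul a b : qconj (qmul a b) = qmul (qconj b) (qconj a).
Proof. by case: a b => ? ? ? ? [? ? ? ?]; quat_ring. Qed.

Lemma qconjK a : qconj (qconj a) = a.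
Proof. by case: a => ? ? ? ?; quat_ring. Qed.

Lemma qadd_conj a : qadd a (qconj a) = qreal (2 * q0 a).
Proof. by case: a => ? ? ? ?; quat_ring. Qed.

Definition qnorm2 a := q0 a ^+ 2 + q1 a ^+ 2 + q2 a ^+ 2 + q3 a ^+ 2.

Lemma qnorm2_ge0 a : 0 <= qnorm2 a.
Proof. by rewrite /qnorm2 !addr_ge0 ?sqr_ge0. Qed.

Lemma qnorm_ge0 a : 0 <= qnorm a.
Proof. exact: sqrtr_ge0. Qed.

Lemma sqr_qnorm a : qnorm a ^+ 2 = qnorm2 a.
Proof. by rewrite sqr_sqrtr // qnorm2_ge0. Qed.

Lemma qnorm_mul a b : qnorm (qmul a b) = qnorm a * qnorm b.
Proof.
rewrite /qnorm -sqrtrM ?qnorm2_ge0 //; congr Num.sqrt.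
by case: a b => ? ? ? ? [? ? ? ?]; rewrite /= ; ring.
Qed.

Lemma qnorm_conj a : qnorm (qconj a) = qnorm a.
Proof. by rewrite /qnorm /= !sqrrN. Qed.

Lemma qnorm_scale r a : qnorm (qscale r a) = `|r| * qnorm a.
Proof.
rewrite /qnorm -sqrtr_sqr -sqrtrM ?sqr_ge0 //; congr Num.sqrt.
by rewrite /=; ring.
Qed.

Lemma qnorm_real r : qnorm (qreal r) = `|r|.
Proof. by rewrite /qnorm /= expr0n /= !addr0 sqrtr_sqr. Qed.

Lemma qnorm_eq0 a : qnorm a = 0 -> a = qreal 0.
Proof.
move=> /eqP; rewrite sqrtr_eq0 le_eqVlt ltNge qnorm2_ge0 orbF /qnorm2 => /eqP h.
have := sqr_ge0 (q0 a); have := sqr_ge0 (q1 a).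
have := sqr_ge0 (q2 a); have := sqr_ge0 (q3 a) => ? ? ? ?.
by apply: quatP => /=; apply/eqP; rewrite -sqrf_eq0; apply/eqP; lra.
Qed.

Lemma qnorm_gt0 a : a <> qreal 0 -> 0 < qnorm a.
Proof.
by move=> a0; rewrite lt_def qnorm_ge0 andbT; apply/eqP => /qnorm_eq0.
Qed.

Lemma q0_le_qnorm a : `|q0 a| <= qnorm a.
Proof.
rewrite -(sqrtr_sqr (q0 a)) ler_wsqrtr // /qnorm2.
by rewrite -!addrA lerDl !addr_ge0 ?sqr_ge0.
Qed.

Lemma qnorm_subC a b : qnorm (qsub a b) = qnorm (qsub b a).
Proof.
have -> : qsub a b = qscale (-1) (qsub b a) by case: a b => ? ? ? ? [? ? ? ?]; quat_ring.
by rewrite qnorm_scale normrN1 mul1r.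
Qed.

Lemma qnorm_le_add_sub a b : qnorm a <= qnorm b + qnorm (qsub a b).
Proof.
set d := qsub a b.
set inner := q0 b * q0 d + q1 b * q1 d + q2 b * q2 d + q3 b * q3 d.
have lagrange : qnorm2 b * qnorm2 d - inner ^+ 2 =
     (q0 b * q1 d - q1 b * q0 d) ^+ 2 + (q0 b * q2 d - q2 b * q0 d) ^+ 2
   + (q0 b * q3 d - q3 b * q0 d) ^+ 2 + (q1 b * q2 d - q2 b * q1 d) ^+ 2
   + (q1 b * q3 d - q3 b * q1 d) ^+ 2 + (q2 b * q3 d - q3 b * q2 d) ^+ 2.
  by rewrite /qnorm2 /inner; ring.
have cauchy_schwarz : inner <= qnorm b * qnorm d.
  apply: le_trans (ler_norm _) _.
  rewrite -ler_sqr ?nnegrE ?mulr_ge0 ?qnorm_ge0 // exprMn !sqr_qnorm.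
  by rewrite real_normK ?num_real // -subr_ge0 lagrange !addr_ge0 ?sqr_ge0.
have expand : qnorm2 a = qnorm2 b + qnorm2 d + 2 * inner.
  by rewrite /d /inner /qnorm2 /=; ring.
rewrite -ler_sqr ?nnegrE ?addr_ge0 ?qnorm_ge0 // sqrrD !sqr_qnorm expand.
rewrite mulr2n; lra.
Qed.

Definition ek (k : nat) : quat R :=
  match k with 0 => qreal 1 | 1 => qe1 | 2 => qe2 | _ => qe3 end.

Lemma qnorm_ek k : qnorm (ek k) = 1.
Proof.
by case: k => [|[|[|k]]]; rewrite /qnorm /= ?expr0n ?expr1n /= ?addr0 ?add0r sqrtr1.
Qed.

Lemma q0_ek k : q0 (ek k) = (k == 0)%:R.
Proof. by case: k => [|[|[|k]]]. Qed.

Lemma q0_ek_conj (m j : 'I_4) : q0 (qmul (ek m) (qconj (ek j))) = (m == j)%:R.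
Proof.
by case: m j => [[|[|[|[|m]]]] ?] [[|[|[|[|j]]]] ?] //=; ring.
Qed.

Lemma ek_conj_ek k : qmul (qconj (ek k)) (ek k) = qreal 1.
Proof. by case: k => [|[|[|k]]]; quat_ring. Qed.

Definition qrot (k : nat) s := qmul (qmul (ek k) s) (qconj (ek k)).

Lemma qrot0 s : qrot 0 s = s.
Proof. by case: s => ? ? ? ?; quat_ring. Qed.

Lemma qrot_ek k s : qmul (qrot k s) (ek k) = qmul (ek k) s.
Proof. by rewrite /qrot -qmulA ek_conj_ek qmulq1. Qed.

Lemma qnorm_qrot k s : qnorm (qrot k s) = qnorm s.
Proof. by rewrite !qnorm_mul qnorm_conj qnorm_ek mul1r mulr1. Qed.

Lemma qrot_neq0 k s : s <> qreal 0 -> qrot k s <> qreal 0.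
Proof.
by move=> /qnorm_gt0 + /(congr1 (@qnorm R)); rewrite qnorm_qrot qnorm_real normr0 => /gt_eqF/eqP.
Qed.

End Quaternions.
Arguments ek {R} k.

Section Sectors.
Variable R : realType.
Implicit Types (s t J : quat R) (w th phi : R).

Lemma qnorm_cos_sin phi J :
  unit_imag J -> qnorm (qadd (qreal (cos phi)) (qscale (sin phi) J)) = 1.
Proof.
move=> [J0 J1]; rewrite /qnorm.
have : qnorm2 J = 1 by rewrite -sqr_qnorm J1 expr1n.
rewrite /qnorm2 /= J0 => normJ.
have -> : (cos phi + sin phi * 0) ^+ 2 + (0 + sin phi * q1 J) ^+ 2
    + (0 + sin phi * q2 J) ^+ 2 + (0 + sin phi * q3 J) ^+ 2
  = cos phi ^+ 2 + sin phi ^+ 2 * (0 ^+ 2 + q1 J ^+ 2 + q2 J ^+ 2 + q3 J ^+ 2).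
  by ring.
by rewrite normJ mulr1 addrC sin2cos2 subrK sqrtr1.
Qed.

Lemma sector_re_ge th t : 0 < th <= pi -> sector th t -> qnorm t * cos th <= q0 t.
Proof.
move=> /andP[th0 thpi] [r [J [phi [r0 [[J0 J1] [phith ->]]]]]].
rewrite qnorm_scale qnorm_cos_sin // mulr1 gtr0_norm //= J0 mulr0 addr0.
have phi_pi : `|phi| <= pi := ltW (lt_le_trans phith thpi).
rewrite ler_pM2l // -(cos_norm phi) ltW // ltr_cos // in_itv /=.
  by rewrite normr_ge0 phi_pi.
by rewrite (ltW th0) thpi.
Qed.

Lemma closure_sector_re_ge w s :
  0 < w <= pi -> qclosure (sector w) s -> qnorm s * cos w <= q0 s.
Proof.
move=> wI s_cl; apply/ler_addgt0Pr => e e0.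
have [t [St st_lt]] := s_cl (e / 2) (divr_gt0 e0 (ltr0Sn _ 1)).
set d := qnorm (qsub s t) in st_lt.
have t_re := sector_re_ge wI St.
have re_diff : - d <= q0 s - q0 t by have := q0_le_qnorm (qsub s t); rewrite ler_norml => /andP[].
have norm_diff : (qnorm s - qnorm t) * cos w <= d.
  apply: le_trans (ler_norm _) _; rewrite normrM.
  apply: le_trans (_ : `|qnorm s - qnorm t| * 1 <= _); first by rewrite ler_wpM2l ?cos_max.
  rewrite mulr1 ler_norml; have := qnorm_le_add_sub s t; have := qnorm_le_add_sub t s.
  rewrite qnorm_subC -/d; lra.
rewrite mulrBl in norm_diff; lra.
Qed.

Lemma sector_of_re_gt th s :
  0 < th < pi -> s <> qreal 0 -> qnorm s * cos th < q0 s -> sector th s.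
Proof.
move=> /andP[th0 thpi] s0 re_gt.
have n0 := qnorm_gt0 s0; set n := qnorm s in n0 re_gt.
set x := q0 s / n.
have xI : -1 <= x <= 1.
  by rewrite -ler_norml normrM normfV (gtr0_norm n0) ler_pdivrMr // mul1r q0_le_qnorm.
set phi := acos x.
have [/andP[phi0 phipi] cos_phi] : 0 <= phi <= pi /\ cos phi = x := acos_def xI.
have phi_lt : phi < th.
  have : cos th < cos phi by rewrite cos_phi /x ltr_pdivlMr // mulrC.
  by rewrite ltr_cos // in_itv /= ?phi0 ?phipi ?(ltW th0) ?(ltW thpi).
set v : quat R := Quat 0 (q1 s) (q2 s) (q3 s).
have n_sqr : n ^+ 2 = q0 s ^+ 2 + qnorm v ^+ 2.
  by rewrite /n !sqr_qnorm /qnorm2 /= expr0n /= add0r !addrA.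
have n_sin : n * sin phi = qnorm v.
  rewrite sin_acos // -(gtr0_norm n0) -sqrtr_sqr -sqrtrM ?sqr_ge0 //.
  have -> : n ^+ 2 * (1 - x ^+ 2) = qnorm v ^+ 2.
    have -> : n ^+ 2 * (1 - x ^+ 2) = n ^+ 2 - q0 s ^+ 2.
      by rewrite /x; field; exact: lt0r_neq0.
    by rewrite n_sqr addrAC subrr add0r.
  by rewrite sqrtr_sqr ger0_norm // qnorm_ge0.
have [v0|v_neq0] := eqVneq (qnorm v) 0.
- have [e1 e2 e3] := qnorm_eq0 v0.
  have n_re : n = q0 s.
    move: n_sqr; rewrite v0 expr0n /= addr0 => /eqP; rewrite eqf_sqr.
    case/orP => /eqP // n_neg; have := cos_geN1 th.
    rewrite -(ler_pM2l n0); lra.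
  exists n, qe1, 0; split => //; split.
    by split => //; rewrite /qnorm /= expr0n expr1n /= add0r !addr0 sqrtr1.
  split; first by rewrite normr0.
  by rewrite cos0 sin0; apply: quatP; rewrite /= ?e1 ?e2 ?e3 -?n_re; ring.
- have v_gt0 : 0 < qnorm v by rewrite lt_def v_neq0 qnorm_ge0.
  exists n, (qscale (qnorm v)^-1 v), phi; split => //; split.
    split; first by rewrite /= mulr0.
    by rewrite qnorm_scale ger0_norm ?invr_ge0 ?ltW // mulVf // lt0r_neq0.
  split; first by rewrite ger0_norm.
  have sin_v : n * (sin phi * (qnorm v)^-1) = 1 by rewrite mulrA n_sin mulfV.
  rewrite cos_phi; apply: quatP; rewrite /= /x.
  + by field; rewrite v_neq0 lt0r_neq0.
  all: by rewrite -[X in X = _]mul1r -[X in X * _ = _]sin_v; ring.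
Qed.

Lemma closure_sector_sub w th s : 0 < w -> w < th -> th < pi ->
  qclosure (sector w) s -> s <> qreal 0 -> sector th s.
Proof.
move=> w0 wth thpi s_cl s0; have th0 := lt_trans w0 wth.
apply: sector_of_re_gt; rewrite ?th0 //.
apply: lt_le_trans (closure_sector_re_ge _ s_cl); last by rewrite w0 ltW // (lt_trans wth).
rewrite ltr_pM2l ?qnorm_gt0 // ltr_cos ?in_itv /= ?ltW //.
exact: lt_trans thpi.
Qed.

Lemma sector_qrot th k s : sector th (qrot k s) -> sector th s.
Proof.
move=> [r [J [phi [r0 [[J0 J1] [phith qrot_eq]]]]]].
exists r, (qmul (qmul (qconj (ek k)) J) (ek k)), phi; split => //; split.
  split; last by rewrite !qnorm_mul qnorm_conj qnorm_ek mul1r mulr1.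
  by case: J J0 {J1 qrot_eq} => ? ? ? ? /= J0; case: k => [|[|[|k]]] /=; rewrite J0; ring.
split => //.
have -> : s = qmul (qmul (qconj (ek k)) (qrot k s)) (ek k).
  by rewrite /qrot -!qmulA ek_conj_ek qmulq1 qmulA ek_conj_ek qmul1q.
by rewrite qrot_eq; case: k {qrot_eq} => [|[|[|k]]]; case: J {J0 J1} => ? ? ? ?; quat_ring.
Qed.

End Sectors.

Lemma sumr_delta (R : pzRingType) (V : lmodType R) n (F : nat -> V) i : (i < n)%N ->
  \sum_(j < n) (j == i :> nat)%:R *: F j = F i.
Proof.
move=> i_lt; rewrite (bigD1 (Ordinal i_lt)) //= eqxx scale1r big1 ?addr0 // => j.
by rewrite -val_eqE /= => /negbTE ->; rewrite scale0r.
Qed.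

Lemma sumr_const_ord (R : pzRingType) n (x : R) : \sum_(k < n) x = n%:R * x.
Proof. by rewrite sumr_const card_ord mulr_natl. Qed.

Section QuaternionicModule.
Variables (R : realType) (V : completeNormedModType R).
Variables (lm : quat R -> V -> V) (rm : V -> quat R -> V).
Hypothesis tsbV : two_sided_banach lm rm.
Implicit Types (a b q s t : quat R) (r : R) (u v x : V).

Lemma lmD a : {morph lm a : u v / u + v}.
Proof. move=> u v; exact: tsb_laddv tsbV a u v. Qed.

Lemma lmDq a b v : lm (qadd a b) v = lm a v + lm b v.
Proof. exact: (tsb_ladd tsbV). Qed.

Lemma lmM a b v : lm (qmul a b) v = lm a (lm b v).
Proof. exact: (tsb_lmul tsbV). Qed.

Lemma lm_real r v : lm (qreal r) v = r *: v.
Proof. exact: (tsb_lreal tsbV). Qed.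

Lemma norm_lm a v : `|lm a v| = qnorm a * `|v|.
Proof. exact: (tsb_lnorm tsbV). Qed.

Lemma lm0 a : lm a 0 = 0.
Proof. by apply: (addrI (lm a 0)); rewrite -lmD !addr0. Qed.

Lemma lmN a v : lm a (- v) = - lm a v.
Proof. by apply/eqP; rewrite -addr_eq0 -lmD addNr lm0. Qed.

Lemma lmB a u v : lm a (u - v) = lm a u - lm a v.
Proof. by rewrite lmD lmN. Qed.

Lemma lm_sum a I (r : seq I) (P : pred I) (F : I -> V) :
  lm a (\sum_(i <- r | P i) F i) = \sum_(i <- r | P i) lm a (F i).
Proof. exact: (big_morph _ (lmD a) (lm0 a)). Qed.

Lemma lmZ a r v : lm a (r *: v) = r *: lm a v.
Proof.
have a_r : qmul a (qreal r) = qmul (qreal r) a by case: a => ? ? ? ?; quat_ring.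
by rewrite -!lm_real -!lmM a_r.
Qed.

Lemma lm_scale r a v : lm (qscale r a) v = r *: lm a v.
Proof.
have -> : qscale r a = qmul (qreal r) a by case: a => ? ? ? ?; quat_ring.
by rewrite lmM lm_real.
Qed.

Lemma sum_lm_conj_ek q x :
  \sum_(k < 4) lm (qmul (qmul (qconj (ek k)) q) (ek k)) x = (4 * q0 q) *: x.
Proof.
rewrite !big_ord_recr big_ord0 /= add0r -!lmDq -lm_real; congr lm.
by case: q => ? ? ? ?; quat_ring.
Qed.

End QuaternionicModule.

Section KCOperator.
Variables (R : realType) (V : completeNormedModType R).
Variables (lm : quat R -> V -> V) (rm : V -> quat R -> V).
Hypothesis tsbV : two_sided_banach lm rm.
Variables (D : set V) (T0 T1 T2 T3 : V -> V).
Hypothesis KCT : KC lm rm D T0 T1 T2 T3.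
Implicit Types (a e s t : quat R) (r : R) (u v w x : V).

Local Notation T := (Defs.comp T0 T1 T2 T3).
Local Notation dom2 := (dom2 lm D T0 T1 T2 T3).
Local Notation Qcs := (Qcs lm T0 T1 T2 T3).
Local Notation rhoS := (rhoS lm D T0 T1 T2 T3).
Local Notation Qinv := (Qinv lm D T0 T1 T2 T3).
Local Notation SLinv := (SLinv lm D T0 T1 T2 T3).
Local Notation opT := (opT lm T0 T1 T2 T3).
Local Notation opTbar := (opTbar lm T0 T1 T2 T3).

(* [comp i] is [T3] for every [i >= 3], so facts about the four components hold for all [i]. *)
Lemma forall_comp (P : (V -> V) -> Prop) :
  (forall i, (i < 4)%N -> P (T i)) -> forall i, P (T i).
Proof.
move=> P_lt [|[|[|i]]].
- exact: (P_lt 0%N).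
- exact: (P_lt 1%N).
- exact: (P_lt 2%N).
- exact: (P_lt 3%N).
Qed.

Lemma dom0 : D 0.
Proof. by case: KCT => [[]]. Qed.

Lemma domD u v : D u -> D v -> D (u + v).
Proof. by case: KCT => [[_ D_add _ _]] *; apply: D_add. Qed.

Lemma dom_lm a v : D v -> D (lm a v).
Proof. by case: KCT => [[_ _ dom_lm _]] *; apply: dom_lm. Qed.

Lemma domZ r v : D v -> D (r *: v).
Proof. by rewrite -(lm_real tsbV); apply: dom_lm. Qed.

Lemma domN v : D v -> D (- v).
Proof. by rewrite -scaleN1r; apply: domZ. Qed.

Lemma domB u v : D u -> D v -> D (u - v).
Proof. by move=> Du Dv; apply: domD => //; apply: domN. Qed.

Lemma dom_sum I (r : seq I) (P : pred I) (F : I -> V) :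
  (forall i, P i -> D (F i)) -> D (\sum_(i <- r | P i) F i).
Proof. exact: (big_ind D dom0 domD). Qed.

Lemma T_linear i : two_sided_linear_on lm rm D (T i).
Proof. by case: KCT => _ T_lin _ _ _; apply: forall_comp. Qed.

Lemma TD i u v : D u -> D v -> T i (u + v) = T i u + T i v.
Proof. by case: (T_linear i) => TD _ _; apply: TD. Qed.

Lemma T_lm i a v : D v -> T i (lm a v) = lm a (T i v).
Proof. by case: (T_linear i) => _ T_lm _; apply: T_lm. Qed.

Lemma TZ i r v : D v -> T i (r *: v) = r *: T i v.
Proof. by rewrite -!(lm_real tsbV); apply: T_lm. Qed.

Lemma T_zero i : T i 0 = 0.
Proof. by rewrite -(scale0r 0) TZ ?scale0r //; exact: dom0. Qed.

Lemma TN i v : D v -> T i (- v) = - T i v.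
Proof. by move=> Dv; rewrite -scaleN1r TZ // scaleN1r. Qed.

Lemma TB i u v : D u -> D v -> T i (u - v) = T i u - T i v.
Proof. by move=> Du Dv; rewrite TD ?TN //; apply: domN. Qed.

Lemma T_sum i I (r : seq I) (P : pred I) (F : I -> V) :
  (forall k, P k -> D (F k)) ->
  T i (\sum_(k <- r | P k) F k) = \sum_(k <- r | P k) T i (F k).
Proof.
move=> DF; pose K x y := D x /\ T i x = y.
suff [] : K (\sum_(k <- r | P k) F k) (\sum_(k <- r | P k) T i (F k)) by [].
apply: big_ind2 => [|x1 x2 y1 y2 [Dx1 <-] [Dy1 <-]|k Pk].
- by split; [exact: dom0 | exact: T_zero].
- by split; [exact: domD | exact: TD].
- by split; [exact: DF|].
Qed.

Lemma dom2P v : dom2 v <-> D v /\ forall i, D (T i v).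
Proof.
split=> [dv|[Dv DTv]].
  split; first by case: dv.
  case: KCT => _ _ _ D_T _.
  exact: (forall_comp (P := fun f => D (f v)) (fun i i_lt => D_T i v i_lt dv)).
split=> //; rewrite /opT.
by do ![apply: domD | apply: dom_lm];
  [exact: (DTv 0%N) | exact: (DTv 1%N) | exact: (DTv 2%N) | exact: (DTv 3%N)].
Qed.

Lemma dom2_dom v : dom2 v -> D v.
Proof. by case. Qed.

Lemma dom2_domT i v : dom2 v -> D (T i v).
Proof. by case/dom2P. Qed.

Lemma dom2D u v : dom2 u -> dom2 v -> dom2 (u + v).
Proof.
move=> /dom2P[Du DTu] /dom2P[Dv DTv]; apply/dom2P; split=> [|i]; first exact: domD.
by rewrite TD //; apply: domD.
Qed.

Lemma dom2_lm a v : dom2 v -> dom2 (lm a v).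
Proof.
move=> /dom2P[Dv DTv]; apply/dom2P; split=> [|i]; first exact: dom_lm.
by rewrite T_lm //; apply: dom_lm.
Qed.

Lemma dom2Z r v : dom2 v -> dom2 (r *: v).
Proof. by rewrite -(lm_real tsbV); apply: dom2_lm. Qed.

Lemma dom2B u v : dom2 u -> dom2 v -> dom2 (u - v).
Proof. by move=> du dv; apply: dom2D => //; rewrite -scaleN1r; apply: dom2Z. Qed.

Lemma dom2_sum I (r : seq I) (P : pred I) (F : I -> V) :
  (forall i, P i -> dom2 (F i)) -> dom2 (\sum_(i <- r | P i) F i).
Proof.
apply: (big_ind dom2) => //; last exact: dom2D.
by apply/dom2P; split=> [|i]; rewrite ?T_zero; exact: dom0.
Qed.

Lemma T_comm i j v : dom2 v -> T i (T j v) = T j (T i v).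
Proof.
case: KCT => _ _ _ _ comm; move: i j v.
apply: (forall_comp (P := fun f => forall j v, dom2 v -> f (T j v) = T j (f v))) => i i_lt.
apply: (forall_comp (P := fun f => forall v, dom2 v -> T i (f v) = f (T i v))) => j j_lt.
by move=> v dv; apply: comm.
Qed.

Lemma opT_sum v : opT v = \sum_(i < 4) lm (ek i) (T i v).
Proof. by rewrite !big_ord_recr big_ord0 /= add0r (lm_real tsbV) scale1r. Qed.

Lemma opTbar_sum v : opTbar v = \sum_(i < 4) lm (qconj (ek i)) (T i v).
Proof.
have lm_conj a x : q0 a = 0 -> lm (qconj a) x = - lm a x.
  move=> a0; rewrite -scaleN1r -(lm_scale tsbV); congr lm.
  by case: a a0 => ? ? ? ? /= ->; quat_ring.
have conj1 : qconj (qreal 1) = qreal 1 :> quat R by quat_ring.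
by rewrite !big_ord_recr big_ord0 /= add0r conj1 (lm_real tsbV) scale1r !lm_conj.
Qed.

Lemma opTB u v : D u -> D v -> opT (u - v) = opT u - opT v.
Proof.
move=> Du Dv; rewrite !opT_sum -sumrB; apply: eq_bigr => i _.
by rewrite TB // (lmB tsbV).
Qed.

(* The mixed terms [e_i conj(e_j) T_i T_j] cancel in pairs since the [T_i] commute
   and [e_i conj(e_j) + e_j conj(e_i) = 2 delta_ij]. *)
Lemma opT_opTbar v : dom2 v -> opT (opTbar v) = \sum_(i < 4) T i (T i v).
Proof.
move=> dv; have Dv := dom2_dom dv; have DTv i : D (T i v) by exact: dom2_domT.
pose S := \sum_(i < 4) \sum_(j < 4) lm (qmul (ek i) (qconj (ek j))) (T i (T j v)).
have -> : opT (opTbar v) = S.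
  rewrite opT_sum opTbar_sum; apply: eq_bigr => i _.
  rewrite T_sum => [|j _]; last exact: dom_lm.
  rewrite (lm_sum tsbV); apply: eq_bigr => j _.
  by rewrite T_lm // (lmM tsbV).
have S_swap : S = \sum_(i < 4) \sum_(j < 4) lm (qmul (ek j) (qconj (ek i))) (T i (T j v)).
  rewrite /S exchange_big; apply: eq_bigr => i _; apply: eq_bigr => j _.
  by rewrite T_comm.
have S2 : S + S = 2 *: \sum_(i < 4) T i (T i v).
  rewrite {2}S_swap -big_split scaler_sumr; apply: eq_bigr => i _.
  rewrite -big_split /= -(sumr_delta (fun j => 2 *: T i (T j v)) (ltn_ord i)).
  apply: eq_bigr => j _; rewrite -(lmDq tsbV).
  have -> : qmul (ek j) (qconj (ek i)) = qconj (qmul (ek i) (qconj (ek j))) :> quat R.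
    by rewrite qconj_mul qconjK.
  by rewrite qadd_conj q0_ek_conj (lm_real tsbV) scalerA mulrC eq_sym.
apply: (@scalerI _ _ 2); first by rewrite pnatr_eq0.
by rewrite -S2 scaler_nat mulr2n.
Qed.

Lemma Qcs_sumE s v :
  Qcs s v = lm (qmul s s) v - lm (qscale 2 s) (T 0 v) + \sum_(i < 4) T i (T i v).
Proof. by rewrite !big_ord_recr big_ord0 /= add0r. Qed.

Definition Tshift s m v := T m v - (m == 0)%:R *: lm s v.

Lemma Tshift_sum s m I (r : seq I) (P : pred I) (F : I -> V) :
  (forall k, P k -> D (F k)) ->
  Tshift s m (\sum_(k <- r | P k) F k) = \sum_(k <- r | P k) Tshift s m (F k).
Proof.
move=> DF; rewrite /Tshift T_sum // (lm_sum tsbV) scaler_sumr -sumrB.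
by apply: eq_bigr.
Qed.

Lemma dom_Tshift s m v : dom2 v -> D (Tshift s m v).
Proof.
by move=> dv; apply: domB; [exact: dom2_domT | apply: domZ; apply: dom_lm; exact: dom2_dom].
Qed.

Lemma dom2_Tshift s m v : dom2 v -> (forall j, dom2 (T j v)) -> dom2 (Tshift s m v).
Proof. by move=> dv dTv; apply: dom2B => //; apply: dom2Z; apply: dom2_lm. Qed.

Lemma Tshift_lm t e s m v :
  qmul t e = qmul e s -> D v -> Tshift t m (lm e v) = lm e (Tshift s m v).
Proof.
move=> te Dv; rewrite /Tshift T_lm // -(lmM tsbV) te.
by rewrite (lmM tsbV) (lmB tsbV) (lmZ tsbV).
Qed.

Lemma Tshift_TshiftE s m n v : dom2 v ->
  Tshift s m (Tshift s n v) = T m (T n v)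
    - ((n == 0)%:R *: lm s (T m v) + (m == 0)%:R *: lm s (T n v))
    + ((m == 0)%:R * (n == 0)%:R) *: lm s (lm s v).
Proof.
move=> dv; have Dv := dom2_dom dv; have DTnv := dom2_domT n dv.
have Dsv := dom_lm s Dv.
rewrite /Tshift TB //; last exact: domZ.
rewrite TZ // T_lm // (lmB tsbV) (lmZ tsbV) scalerBr scalerA.
by rewrite opprB opprD !addrA [in LHS]addrAC.
Qed.

Lemma Tshift_comm s m n v : dom2 v -> Tshift s m (Tshift s n v) = Tshift s n (Tshift s m v).
Proof. by move=> dv; rewrite !Tshift_TshiftE // T_comm // [X in _ - X]addrC mulrC. Qed.

(* [Q_s = (T_0 - s)^2 + T_1^2 + T_2^2 + T_3^2], as [s] commutes with the [T_i]. *)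
Lemma Qcs_Tshift_sum s v : dom2 v -> Qcs s v = \sum_(m < 4) Tshift s m (Tshift s m v).
Proof.
move=> dv; have delta_sqr (m : nat) : (m == 0)%:R * (m == 0)%:R = (m == 0)%:R :> R.
  by case: (m == 0); rewrite ?mul1r ?mul0r.
under eq_bigr do rewrite Tshift_TshiftE // delta_sqr -scalerDr.
rewrite big_split sumrB /= (sumr_delta (fun m => lm s (T m v) + lm s (T m v))) //.
rewrite (sumr_delta (fun=> lm s (lm s v))) // Qcs_sumE -(lmM tsbV).
rewrite (lm_scale tsbV) scaler_nat mulr2n [LHS]addrAC [RHS]addrAC.
by congr (_ - _); rewrite addrC.
Qed.

Lemma Qcs_lm t e s v : qmul t e = qmul e s -> dom2 v -> Qcs t (lm e v) = lm e (Qcs s v).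
Proof.
move=> te dv; rewrite (Qcs_Tshift_sum _ dv) Qcs_Tshift_sum; last exact: dom2_lm.
rewrite (lm_sum tsbV); apply: eq_bigr => m _.
by rewrite (Tshift_lm _ te (dom2_dom dv)) (Tshift_lm _ te (dom_Tshift s m dv)).
Qed.

Lemma Qcs_Tshift s m v : dom2 v -> (forall j, dom2 (T j v)) ->
  Qcs s (Tshift s m v) = Tshift s m (Qcs s v).
Proof.
move=> dv dTv; have dUv n : dom2 (Tshift s n v) by exact: dom2_Tshift.
rewrite !Qcs_Tshift_sum // Tshift_sum => [|n _]; last exact/dom_Tshift/dUv.
by apply: eq_bigr => n _; rewrite [Tshift s n (Tshift s m v)]Tshift_comm // Tshift_comm.
Qed.

Lemma Qinv_spec s v : rhoS s -> dom2 (Qinv s v) /\ Qcs s (Qinv s v) = v.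
Proof.
case=> _ /(_ v) [w wP].
exact: (@xgetI _ 0 [set w | dom2 w /\ Qcs s w = v] w wP).
Qed.

Lemma dom2_Qinv s v : rhoS s -> dom2 (Qinv s v).
Proof. by case/(Qinv_spec v). Qed.

Lemma QinvK s v : rhoS s -> Qcs s (Qinv s v) = v.
Proof. by case/(Qinv_spec v). Qed.

Lemma QcsK s w : rhoS s -> dom2 w -> Qinv s (Qcs s w) = w.
Proof.
move=> rs dw; have [Qinj _] := rs.
by apply: Qinj => //; [exact: dom2_Qinv | rewrite QinvK].
Qed.

Lemma Qinv_lm t e s v : rhoS s -> rhoS t -> qmul t e = qmul e s ->
  Qinv t (lm e v) = lm e (Qinv s v).
Proof.
move=> rs rt te; have dw := dom2_Qinv v rs.
by rewrite -{1}(QinvK v rs) -(Qcs_lm te dw) QcsK //; exact: dom2_lm.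
Qed.

Lemma Qinv_Tshift s m w : rhoS s -> dom2 w -> (forall j, dom2 (T j w)) ->
  Qinv s (Tshift s m (Qcs s w)) = Tshift s m w.
Proof. by move=> rs dw dTw; rewrite -Qcs_Tshift // QcsK //; exact: dom2_Tshift. Qed.

Lemma dom2_SLinv t y : rhoS t -> D y -> dom2 (SLinv t y).
Proof.
move=> rt Dy; have dw := dom2_Qinv y rt; set w := Qinv t y in dw *.
have Dw := dom2_dom dw; have DTw i : D (T i w) by exact: dom2_domT.
have D_opTbar : D (opTbar w) by rewrite opTbar_sum; apply: dom_sum => j _; exact: dom_lm.
split; first by apply: domB => //; exact: dom_lm.
rewrite /SLinv -/w opTB //; last exact: dom_lm.
rewrite opT_opTbar //.
have -> : \sum_(i < 4) T i (T i w) = y - (lm (qmul t t) w - lm (qscale 2 t) (T 0 w)).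
  by rewrite -(QinvK y rt) -/w Qcs_sumE addrC addKr.
apply: domB; first by case: (dom2_lm t dw).
by apply: domB => //; apply: domB; apply: dom_lm.
Qed.

Lemma SLinv_lm t e s v : rhoS s -> rhoS t -> qmul t e = qmul e s ->
  SLinv t (lm e v) = lm e (lm s (Qinv s v))
    - \sum_(j < 4) lm (qmul (qconj (ek j)) e) (T j (Qinv s v)).
Proof.
move=> rs rt te; have Dw := dom2_dom (dom2_Qinv v rs).
rewrite /SLinv (Qinv_lm _ rs rt te) opTbar_sum.
rewrite -!(lmM tsbV) te; congr (_ - _); apply: eq_bigr => j _.
by rewrite T_lm // (lmM tsbV).
Qed.

Section SquaredResolvent.
Variable s : quat R.
Hypothesis rhoS_qrot : forall k, rhoS (qrot k s).

Let rhoS_s : rhoS s.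
Proof. by rewrite -(qrot0 s). Qed.

(* Averaging over the four rotations [e_k s conj(e_k)] isolates the real part:
   [sum_k conj(e_k) q e_k = 4 Re q]. *)
Lemma conj_average_SLinv (m : 'I_4) v :
  \sum_(k < 4) lm (qmul (qconj (ek k)) (ek m)) (SLinv (qrot k s) (lm (ek k) v))
  = - (4 *: Tshift s m (Qinv s v)).
Proof.
set w := Qinv s v.
have term k : lm (qmul (qconj (ek k)) (ek m)) (SLinv (qrot k s) (lm (ek k) v))
    = lm (qmul (qmul (qconj (ek k)) (ek m)) (ek k)) (lm s w)
      - \sum_(j < 4)
          lm (qmul (qmul (qconj (ek k)) (qmul (ek m) (qconj (ek j)))) (ek k)) (T j w).
  rewrite (SLinv_lm _ rhoS_s (rhoS_qrot k) (qrot_ek k s)) (lmB tsbV) (lm_sum tsbV).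
  congr (_ - _); first by rewrite [in RHS](lmM tsbV).
  by apply: eq_bigr => j _; rewrite -(lmM tsbV) !qmulA.
under eq_bigr do rewrite term.
rewrite sumrB (sum_lm_conj_ek tsbV) exchange_big /=.
under eq_bigr do rewrite (sum_lm_conj_ek tsbV) q0_ek_conj eq_sym -scalerA.
rewrite -scaler_sumr (sumr_delta (fun j => T j w) (ltn_ord m)) q0_ek.
by rewrite /Tshift scalerBr opprB scalerA.
Qed.

Lemma dom2_Tshift_Qinv (m : 'I_4) v : D v -> dom2 (Tshift s m (Qinv s v)).
Proof.
move=> Dv; have -> : Tshift s m (Qinv s v) = - 4^-1 *:
    \sum_(k < 4) lm (qmul (qconj (ek k)) (ek m)) (SLinv (qrot k s) (lm (ek k) v)).
  by rewrite conj_average_SLinv scalerN scaleNr opprK scalerA mulVf ?scale1r // pnatr_eq0.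
apply: dom2Z; apply: dom2_sum => k _; apply: dom2_lm.
by apply: dom2_SLinv => //; exact: dom_lm.
Qed.

Lemma dom2_T_Qinv j v : D v -> dom2 (T j (Qinv s v)).
Proof.
move=> Dv; move: j; apply: (forall_comp (P := fun f => dom2 (f (Qinv s v)))) => j j_lt.
have -> : T j (Qinv s v)
    = Tshift s (Ordinal j_lt) (Qinv s v) + (j == 0)%:R *: lm s (Qinv s v).
  by rewrite /Tshift subrK.
apply: dom2D; first exact: dom2_Tshift_Qinv.
by apply: dom2Z; apply: dom2_lm; apply: dom2_Qinv.
Qed.

(* [Q_s^{-1} = Q_s^{-2} Q_s = sum_m P_m P_m] with [P_m = (T_m - delta_m0 s) Q_s^{-1}]. *)
Lemma Qinv_sum_sqr v :
  Qinv s v = \sum_(m < 4) Tshift s m (Qinv s (Tshift s m (Qinv s v))).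
Proof.
have [dw Qw] := Qinv_spec v rhoS_s; set w := Qinv s v in dw Qw *.
have [dp Qp] := Qinv_spec w rhoS_s; set p := Qinv s w in dp Qp *.
have dTp j : dom2 (T j p) by exact: dom2_T_Qinv (dom2_dom dw).
rewrite -{1}Qp (Qcs_Tshift_sum _ dp); apply: eq_bigr => m _; congr Tshift.
by have := Qinv_Tshift m rhoS_s dp dTp; rewrite Qp => ->.
Qed.

Variable K : R.
Hypothesis K_ge0 : 0 <= K.
Hypothesis SLinv_le : forall k u, `|SLinv (qrot k s) u| <= K * `|u|.

Lemma norm_Tshift_Qinv (m : 'I_4) v : `|Tshift s m (Qinv s v)| <= K * `|v|.
Proof.
have : `|- (4 *: Tshift s m (Qinv s v))| <= \sum_(k < 4) K * `|v|.
  rewrite -conj_average_SLinv; apply: le_trans (ler_norm_sum _ _ _) _.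
  apply: ler_sum => k _; rewrite (norm_lm tsbV) qnorm_mul qnorm_conj !qnorm_ek !mul1r.
  by apply: le_trans (SLinv_le _ _) _; rewrite (norm_lm tsbV) qnorm_ek mul1r.
by rewrite normrN normrZ (ger0_norm (ler0n _ 4)) sumr_const_ord ler_pM2l.
Qed.

Lemma norm_Qinv v : `|Qinv s v| <= 4 * K ^+ 2 * `|v|.
Proof.
rewrite Qinv_sum_sqr; apply: le_trans (ler_norm_sum _ _ _) _.
rewrite -mulrA expr2 -mulrA -sumr_const_ord; apply: ler_sum => m _.
apply: le_trans (norm_Tshift_Qinv _ _) _.
by rewrite ler_wpM2l // norm_Tshift_Qinv.
Qed.

End SquaredResolvent.
End KCOperator.

Lemma rhoS_outside_sector (R : realType) (V : completeNormedModType R)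
    (lm : quat R -> V -> V) (D : set V) (T0 T1 T2 T3 : V -> V) (w th : R) t :
  sigmaS lm D T0 T1 T2 T3 `<=` qclosure (sector w) -> 0 < w -> w < th -> th < pi ->
  ~ sector th t -> t <> qreal 0 -> rhoS lm D T0 T1 T2 T3 t.
Proof.
move=> spec_sub w0 wth thpi t_out t0.
have [//|not_rho] := pselect (rhoS lm D T0 T1 T2 T3 t).
by case: t_out; apply: (closure_sector_sub w0 wth thpi) => //; exact: spec_sub.
Qed.

Theorem lemma2p7 (R : realType) (V : completeNormedModType R)
  (lm : quat R -> V -> V) (rm : V -> quat R -> V)
  (D : set V) (T0 T1 T2 T3 : V -> V) (w : R) :
  two_sided_banach lm rm ->
  0 < w < pi ->
  type_omega lm rm D T0 T1 T2 T3 w ->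
  type_omega lm rm D T0 (fun v => - T1 v) (fun v => - T2 v) (fun v => - T3 v) w ->
  forall th : R, w < th < pi -> exists C : R, 0 <= C /\
    forall s : quat R, ~ sector th s -> s <> qreal 0 -> forall v : V,
      `|Qinv lm D T0 T1 T2 T3 s v| <= C / qnorm s ^+ 2 * `|v|.
Proof.
move=> tsbV /andP[w0 _] [KCT spec_sub SL_bound] _ th thI.
have [C [C0 SL_le]] := SL_bound th thI; have /andP[wth thpi] := thI.
exists (4 * C ^+ 2); split; first by rewrite mulr_ge0 ?sqr_ge0.
move=> s s_out s0 v; have s_gt0 := qnorm_gt0 s0.
have qrot_out k : ~ sector th (qrot k s) by move/sector_qrot.
have rhoS_qrot k : rhoS lm D T0 T1 T2 T3 (qrot k s).
  exact: (rhoS_outside_sector spec_sub w0 wth thpi (qrot_out k) (qrot_neq0 (k := k) s0)).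
have SLinv_le k u : `|SLinv lm D T0 T1 T2 T3 (qrot k s) u| <= C / qnorm s * `|u|.
  by have [] := SL_le _ (qrot_out k) (qrot_neq0 (k := k) s0) u; rewrite qnorm_qrot.
have := norm_Qinv tsbV KCT rhoS_qrot (divr_ge0 C0 (ltW s_gt0)) SLinv_le v.
by rewrite expr_div_n mulrA.
Qed.
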